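(* Let $p(x)$ be a prior density and $p(y\mid x)$ a likelihood on $\mathbb{R}^N$ for fixed data $y$, with posterior $p(x\mid y)\propto p(x)p(y\mid x)$. Let $1\le T_r<T_{r+1}$ be temperatures and define tempered densities either by posterior tempering, $\pi_t(x)\propto p(x)^{1/T_t}p(y\mid x)^{1/T_t}$ (with $T_{r+1}<\infty$), or by likelihood tempering, $\pi_t(x)\propto p(x)\,p(y\mid x)^{1/T_t}$ ($t\in\{r,r+1\}$), assumed normalizable. Let $X_r\sim\pi_r$ and $X_{r+1}\sim\pi_{r+1}$ be independent, and define the mean swap probability $$\mathrm P[\mathrm{Swap}_{(r,r+1)}]:=\mathbb E\left[\min\left\{1,\frac{\pi_r(X_{r+1})\pi_{r+1}(X_r)}{\pi_r(X_r)\pi_{r+1}(X_{r+1})}\right\}\right].$$ Then $$\mathrm P[\mathrm{Swap}_{(r,r+1)}]=\begin{cases}2\,\mathrm P[p(X_r\mid y)<p(X_{r+1}\mid y)],&\text{posterior tempering},\\ 2\,\mathrm P[p(y\mid X_r)<p(y\mid X_{r+1})],&\text{likelihood tempering}.\end{cases}$$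
   Formalization: Ties have probability zero: $\mathrm P[p(X_r\mid y)=p(X_{r+1}\mid y)]=0$ under posterior tempering and $\mathrm P[p(y\mid X_r)=p(y\mid X_{r+1})]=0$ under likelihood tempering. The statement above fails without it. *)

From HB Require Import structures.
From mathcomp Require Import all_boot all_order all_algebra.
From mathcomp Require Import all_classical all_reals all_analysis.

Set Implicit Arguments.
Unset Strict Implicit.
Unset Printing Implicit Defensive.

Import Order.TTheory GRing.Theory Num.Theory.
Local Open Scope ring_scope.
Local Open Scope ereal_scope.

Inductive tempering := PosteriorTempering | LikelihoodTempering.

Section Tempering.
Context {d : measure_display} {T : measurableType d} {R : realType}.

Definition invtemp (t : \bar R) : R :=
  match t with EFin r => r^-1 | _ => 0%R end.

(* unnormalized tempered density at inverse temperature b: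
   posterior tempering : p(x)^b p(y|x)^b
   likelihood tempering: p(x) p(y|x)^b   (with 0^0 = 1) *)
Definition tempered_unnorm (m : tempering) (prior lik : T -> R) (b : R)
  (x : T) : R :=
  match m with
  | PosteriorTempering => (powR (prior x) b * powR (lik x) b)%R
  | LikelihoodTempering => (prior x * powR (lik x) b)%R
  end.

Definition normconst (mu : {measure set T -> \bar R}) (f : T -> R) : \bar R :=
  \int[mu]_x (f x)%:E.

Definition normalize (mu : {measure set T -> \bar R}) (f : T -> R) (x : T)
  : R := (f x / fine (normconst mu f))%R.

Definition posterior (mu : {measure set T -> \bar R}) (prior lik : T -> R)
  : T -> R := normalize mu (fun x => prior x * lik x)%R.

Definition compared (mu : {measure set T -> \bar R}) (m : tempering)
  (prior lik : T -> R) : T -> R :=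
  match m with
  | PosteriorTempering => posterior mu prior lik
  | LikelihoodTempering => lik
  end.

End Tempering.

From HB Require Import structures.
From mathcomp Require Import all_boot all_order all_algebra.
From mathcomp Require Import all_classical all_reals all_analysis.
From mathcomp Require Import measurable_realfun.
Import Order.TTheory GRing.Theory Num.Theory.
Local Open Scope ring_scope.
Local Open Scope classical_set_scope.

(* Write a(x, y) := pi_r(x) pi_{r+1}(y).  The swap acceptance integrand
   min(1, a(y, x) / a(x, y)) a(x, y) equals min(a(x, y), a(y, x)).  In both
   tempering schemes pi_r / pi_{r+1} is, up to a constant, a positive power of
   the compared quantity L, hence nondecreasing along L; so the minimum is
   a(x, y) when L x < L y and a(y, x) when L y < L x.  Integrating, the
   symmetry (x, y) <-> (y, x) of mu \x mu turns the second part into a copy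
   of the first, giving 2 P[L(X_r) < L(X_{r+1})], and the ties contribute
   nothing. *)

Lemma ler_powR_cross (R : realType) (s1 s2 a b : R) :
  0 <= s1 <= s2 -> 0 <= b < a -> s1 `^ a * s2 `^ b <= s2 `^ a * s1 `^ b.
Proof.
move=> /andP[s1_ge0 s12] /andP[b_ge0 ba].
have [->|s1_neq0] := eqVneq s1 0.
  by rewrite powR0 ?gt_eqF ?(le_lt_trans b_ge0 ba) // mul0r mulr_ge0 ?powR_ge0.
have s1_gt0 : 0 < s1 by rewrite lt_neqAle eq_sym s1_neq0.
have powR_split s : 0 < s -> s `^ a = s `^ (a - b) * s `^ b.
  by move=> s_gt0; rewrite -powRD ?subrK // (gt_eqF s_gt0) implybT.
rewrite (powR_split s1) // (powR_split s2) ?(lt_le_trans s1_gt0) //.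
rewrite -!mulrA [s2 `^ b * _]mulrC.
apply: ler_wpM2r; first by rewrite mulr_ge0 ?powR_ge0.
have s2_ge0 := le_trans s1_ge0 s12.
by apply: ge0_ler_powR; rewrite ?nnegrE // subr_ge0 ltW.
Qed.

Lemma mul_min1_div (R : realFieldType) (a b : R) : 0 <= a -> 0 <= b ->
  Num.min 1 (a / b) * b = Num.min b a.
Proof.
move=> a_ge0 b_ge0; have [->|b_neq0] := eqVneq b 0.
  by rewrite mulr0 min_l.
have b_gt0 : 0 < b by rewrite lt_neqAle eq_sym b_neq0.
have [ab|ba] := leP a b.
  by rewrite min_r ?divfK ?min_r // ler_pdivrMr // mul1r.
by rewrite min_l ?mul1r ?min_l ?ltW // ltr_pdivlMr // mul1r.
Qed.

Lemma integral_prod_swap d1 d2 (T1 : measurableType d1)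
    (T2 : measurableType d2) (R : realType)
    (m1 : {sigma_finite_measure set T1 -> \bar R})
    (m2 : {sigma_finite_measure set T2 -> \bar R}) (G : T2 * T1 -> \bar R) :
  measurable_fun setT G -> (forall z, 0 <= G z)%E ->
  (\int[m1 \x m2]_z G (z.2, z.1) = \int[m2 \x m1]_z G z)%E.
Proof.
move=> mG G_ge0; rewrite fubini_tonelli1 ?fubini_tonelli2 //.
exact: measurableT_comp mG (measurable_fun_pair _ _).
Qed.

(* [f / g] is nondecreasing along [L], cross-multiplied so that zeros of [g]
   need no special case. *)
Definition ratio_nondecreasing {T : Type} {R : numDomainType} (L f g : T -> R)
  : Prop := forall x y, L x < L y -> f x * g y <= f y * g x.

Lemma ratio_nondecreasing_divr (T : Type) (R : numFieldType) (L f g : T -> R)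
    (a b : R) : 0 <= a -> 0 <= b -> ratio_nondecreasing L f g ->
  ratio_nondecreasing L (fun x => f x / a) (fun x => g x / b).
Proof.
move=> a_ge0 b_ge0 fgL x y /fgL fg_xy.
by rewrite !mulf_div; apply: ler_wpM2r; rewrite // invr_ge0 mulr_ge0.
Qed.

Section MeanSwapProbability.
Context d (T : measurableType d) (R : realType).
Variable mu : {sigma_finite_measure set T -> \bar R}.
Variables f g L : T -> R.
Hypotheses (mf : measurable_fun setT f) (mg : measurable_fun setT g).
Hypothesis mL : measurable_fun setT L.
Hypotheses (f_ge0 : forall x, 0 <= f x) (g_ge0 : forall x, 0 <= g x).
Hypothesis fgL : ratio_nondecreasing L f g.

Let measurable_fst_comp {h : T -> R} : measurable_fun setT h ->
  measurable_fun setT (fun z : T * T => h z.1).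
Proof. by move=> mh; exact: measurableT_comp mh measurable_fst. Qed.

Let measurable_snd_comp {h : T -> R} : measurable_fun setT h ->
  measurable_fun setT (fun z : T * T => h z.2).
Proof. by move=> mh; exact: measurableT_comp mh measurable_snd. Qed.

Let measurable_weighted {w : T * T -> R} : measurable_fun setT w ->
  measurable_fun setT (fun z => (w z * f z.1 * g z.2)%:E).
Proof.
move=> mw; apply/measurable_EFinP/measurable_funM.
  by apply: measurable_funM => //; exact: measurable_fst_comp.
exact: measurable_snd_comp.
Qed.

Let measurable_indicator {b : T * T -> bool} : measurable_fun setT b ->
  measurable_fun setT (fun z => (b z)%:R : R).
Proof. by move=> mb; exact: (measurableT_comp (f := fun b : bool => b%:R : R)). Qed.

Let lt_part (z : T * T) : \bar R :=
  ((L z.1 < L z.2)%R%:R * f z.1 * g z.2)%:E.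

Let tie_part (z : T * T) : \bar R :=
  ((L z.1 == L z.2)%:R * Num.min (f z.1 * g z.2) (f z.2 * g z.1))%:E.

Let lt_part_ge0 z : (0 <= lt_part z)%E.
Proof. by rewrite lee_fin !mulr_ge0. Qed.

Let tie_part_ge0 z : (0 <= tie_part z)%E.
Proof. by rewrite lee_fin mulr_ge0 // le_min !mulr_ge0. Qed.

Let measurable_lt_part : measurable_fun setT lt_part.
Proof.
apply: measurable_weighted; apply: measurable_indicator.
exact: measurable_fun_ltr (measurable_fst_comp mL) (measurable_snd_comp mL).
Qed.

Let measurable_tie_part : measurable_fun setT tie_part.
Proof.
apply/measurable_EFinP/measurable_funM.
  apply: measurable_indicator.
  exact: measurable_fun_eqr (measurable_fst_comp mL) (measurable_snd_comp mL).
apply: (measurable_minr (f := fun z => f z.1 * g z.2)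
                       (g := fun z => f z.2 * g z.1)).
  exact: measurable_funM (measurable_fst_comp mf) (measurable_snd_comp mg).
exact: measurable_funM (measurable_snd_comp mf) (measurable_fst_comp mg).
Qed.

Let min_ratio_split z :
  (Num.min 1 ((f z.2 * g z.1) / (f z.1 * g z.2)) * f z.1 * g z.2)%:E =
    (lt_part z + lt_part (z.2, z.1) + tie_part z)%E.
Proof.
rewrite /lt_part /tie_part /= -!EFinD -mulrA mul_min1_div ?mulr_ge0 //.
case: (ltgtP (L z.1) (L z.2)) => [/fgL xy|/fgL yx|_].
- by rewrite min_l // mul1r !mul0r !addr0.
- by rewrite min_r // mul1r !mul0r addr0 add0r.
- by rewrite mul1r !mul0r !add0r.
Qed.

Let integral_tie_part :
  (\int[mu \x mu]_z (((L z.1 == L z.2)%:R : R) * f z.1 * g z.2)%:E = 0)%E ->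
  (\int[mu \x mu]_z tie_part z = 0)%E.
Proof.
move=> no_ties; apply/eqP; rewrite eq_le integral_ge0 ?andbT // -no_ties.
apply: ge0_le_integral => //.
  apply: measurable_weighted; apply: measurable_indicator.
  exact: measurable_fun_eqr (measurable_fst_comp mL) (measurable_snd_comp mL).
by move=> z _; rewrite lee_fin -mulrA ler_wpM2l // ge_min lexx.
Qed.

Lemma mean_swap_probabilityE :
  (\int[mu \x mu]_z (((L z.1 == L z.2)%:R : R) * f z.1 * g z.2)%:E = 0)%E ->
  (\int[mu \x mu]_z
      (Num.min 1 ((f z.2 * g z.1) / (f z.1 * g z.2)) * f z.1 * g z.2)%:E
   = 2%:E * \int[mu \x mu]_z (((L z.1 < L z.2)%R%:R : R) * f z.1 * g z.2)%:E)%E.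
Proof.
move=> /integral_tie_part tie_null.
have m_lt_swap : measurable_fun setT (fun z => lt_part (z.2, z.1)).
  exact: measurableT_comp measurable_lt_part (measurable_fun_pair _ _).
under eq_integral do rewrite min_ratio_split.
rewrite ge0_integralD //; last 2 first.
- by move=> z _; rewrite adde_ge0.
- exact: emeasurable_funD.
rewrite ge0_integralD // tie_null adde0.
rewrite (@integral_prod_swap _ _ _ _ _ mu mu lt_part) //.
by rewrite -mule2n -mule_natl.
Qed.

End MeanSwapProbability.

Section Normalize.
Context {d} {T : measurableType d} {R : realType}.
Context {mu : {measure set T -> \bar R}} {f : T -> R}.
Hypothesis f_ge0 : forall x, 0 <= f x.

Lemma fine_normconst_ge0 : 0 <= fine (normconst mu f).
Proof. by apply/fine_ge0/integral_ge0 => x _; rewrite lee_fin. Qed.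

Lemma normalize_ge0 x : 0 <= normalize mu f x.
Proof. by rewrite divr_ge0 ?fine_normconst_ge0. Qed.

Lemma normalize_lt x y : normalize mu f x < normalize mu f y -> f x < f y.
Proof.
rewrite /normalize; have [->|Z_gt0] := eqVneq (fine (normconst mu f)) 0.
  by rewrite invr0 !mulr0 ltxx.
by rewrite ltr_pM2r // invr_gt0 lt_neqAle eq_sym Z_gt0 fine_normconst_ge0.
Qed.

End Normalize.

Lemma measurable_normalize d (T : measurableType d) (R : realType)
    (mu : {measure set T -> \bar R}) (f : T -> R) :
  measurable_fun setT f -> measurable_fun setT (normalize mu f).
Proof. by move=> mf; apply: measurable_funM => //; exact: measurable_cst. Qed.

Section TemperedDensities.
Context {d} {T : measurableType d} {R : realType}.
Context {mu : {measure set T -> \bar R}}.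
Variable m : tempering.
Context {prior lik : T -> R}.
Hypotheses (m_prior : measurable_fun setT prior)
  (m_lik : measurable_fun setT lik).
Hypotheses (prior_ge0 : forall x, 0 <= prior x)
  (lik_ge0 : forall x, 0 <= lik x).

Lemma tempered_unnorm_ge0 b x : 0 <= tempered_unnorm m prior lik b x.
Proof. by case: m => /=; rewrite mulr_ge0 ?powR_ge0. Qed.

Lemma measurable_tempered_unnorm b :
  measurable_fun setT (tempered_unnorm m prior lik b).
Proof.
have m_pow (h : T -> R) :
    measurable_fun setT h -> measurable_fun setT (fun x => h x `^ b).
  by move=> mh; exact: measurableT_comp (measurable_powR b) mh.
by case: m => /=; apply: measurable_funM => //; exact: m_pow.
Qed.

Lemma measurable_compared : measurable_fun setT (compared mu m prior lik).
Proof.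
by case: m => //=; apply/measurable_normalize/measurable_funM.
Qed.

Lemma ratio_nondecreasing_tempered a b : 0 <= b < a ->
  ratio_nondecreasing (compared mu m prior lik)
    (tempered_unnorm m prior lik a) (tempered_unnorm m prior lik b).
Proof.
move=> ba x y; case: m => /=.
  have pl_ge0 z : 0 <= prior z * lik z by rewrite mulr_ge0.
  move=> /(normalize_lt pl_ge0) xy.
  by rewrite -!powRM //; apply: ler_powR_cross; rewrite // pl_ge0 ltW.
move=> xy; rewrite mulrACA [X in _ <= X]mulrACA [prior y * _]mulrC.
apply: ler_wpM2l; first by rewrite mulr_ge0.
by apply: ler_powR_cross; rewrite // lik_ge0 ltW.
Qed.

End TemperedDensities.

Lemma invtemp_lt (R : realType) (Tr : R) (Tr1 : \bar R) :
  0 < Tr -> (Tr%:E < Tr1)%E -> 0 <= invtemp Tr1 < invtemp Tr%:E.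
Proof.
move=> Tr_gt0; case: Tr1 => [r||] //=; last by rewrite lexx invr_gt0.
rewrite lte_fin => Tr_r; have r_gt0 := lt_trans Tr_gt0 Tr_r.
by rewrite invr_ge0 ltW //= ltf_pV2 ?posrE.
Qed.

Theorem proposition5 (d : measure_display) (T : measurableType d)
  (R : realType) (mu : {sigma_finite_measure set T -> \bar R})
  (m : tempering) (prior lik : T -> R) (Tr : R) (Tr1 : \bar R) :
  measurable_fun setT prior -> measurable_fun setT lik ->
  (forall x, 0 <= prior x) -> (forall x, 0 <= lik x) ->
  (* the posterior p(x|y) ∝ p(x) p(y|x) is normalizable *)
  (0 < normconst mu (fun x => (prior x * lik x)%R) < +oo)%E ->
  (* temperatures 1 <= T_r < T_{r+1} (T_{r+1} = +oo allowed only for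
     likelihood tempering) *)
  1 <= Tr -> (Tr%:E < Tr1)%E ->
  (m = PosteriorTempering -> (Tr1 < +oo)%E) ->
  (* the tempered densities are normalizable *)
  (0 < normconst mu (tempered_unnorm m prior lik (invtemp Tr%:E)) < +oo)%E ->
  (0 < normconst mu (tempered_unnorm m prior lik (invtemp Tr1)) < +oo)%E ->
  let pi_r := normalize mu (tempered_unnorm m prior lik (invtemp Tr%:E)) in
  let pi_r1 := normalize mu (tempered_unnorm m prior lik (invtemp Tr1)) in
  let L := compared mu m prior lik in
  (* no ties: P[L(X_r) = L(X_{r+1})] = 0 *)
  (\int[mu \x mu]_z
      (((L z.1 == L z.2)%:R : R) * pi_r z.1 * pi_r1 z.2)%R%:E = 0)%E ->
  (\int[mu \x mu]_z
      ((Num.min (1:R) ((pi_r z.2 * pi_r1 z.1) / (pi_r z.1 * pi_r1 z.2))%R)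
        * pi_r z.1 * pi_r1 z.2)%R%:E
   = 2%:E * \int[mu \x mu]_z
      (((L z.1 < L z.2)%R%:R : R) * pi_r z.1 * pi_r1 z.2)%R%:E)%E.
Proof.
(* Neither is
   T_{r+1} < +oo: inverse temperature 0 is just the smallest exponent. *)
move=> m_prior m_lik prior_ge0 lik_ge0 _ Tr_ge1 Tr_lt _ _ _ pi_r pi_r1 L no_ties.
have temp_ge0 := tempered_unnorm_ge0 m prior_ge0.
have m_temp := measurable_tempered_unnorm m m_prior m_lik.
apply: mean_swap_probabilityE => //.
- exact/measurable_normalize/m_temp.
- exact/measurable_normalize/m_temp.
- exact: measurable_compared.
- exact: normalize_ge0.
- exact: normalize_ge0.
apply: ratio_nondecreasing_divr; rewrite ?fine_normconst_ge0 //.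
apply: ratio_nondecreasing_tempered => //.
by apply: invtemp_lt; rewrite // (lt_le_trans ltr01).
Qed.
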